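(* Let $M$ be an $n\times d$ matrix (a database). For every nonempty subset of columns $J\subseteq[d]$, every family of thresholds $\{t_j\}_{j\in J}\subseteq[0,1]$, and every $j^\star\in J$, \[ Q_J\Big(\prod_{j\in J} t_j\Big)\;\le\;\sum_{j\in J} Q_j(t_j)\;+\;\sum_{j\in J\setminus\{j^\star\}} t_j\,|V_j| . \]
   Context: $M$ has $n$ rows (users) and $d$ columns (features); $M_{ij}$ is the value of feature $j$ for user $i$. For a column $j$, $V_j=\{M_{ij}: i\in[n]\}$, and for $J\subseteq[d]$, $V_J=\prod_{j\in J}V_j$ (Cartesian product). The empirical joint distribution of the columns $J$ is $p_J(v)=\frac{1}{n}\,|\{i\in[n]: M_{ij}=v_j \text{ for all } j\in J\}|$ for $v\in V_J$. The exposure of columns $J$ at threshold $t$ is \[ Q_J(t)=\sum_{v\in V_J} p_J(v)\,\mathbf 1[p_J(v)<t], \] i.e. the fraction of users whose restricted row (to columns $J$) is shared by fewer than $tn$ users. For a single column $j$, $Q_j:=Q_{\{j\}}$ and $p_j:=p_{\{j\}}$. *)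

From HB Require Import structures.
From mathcomp Require Import all_boot all_order all_algebra.
Set Implicit Arguments. Unset Strict Implicit. Unset Printing Implicit Defensive.
Import Order.TTheory GRing.Theory Num.Theory.
Local Open Scope ring_scope.

Section Exposure.
Variables (R : realFieldType) (T : finType) (n d : nat) (M : 'M[T]_(n, d)).

Definition colsub (J : {set 'I_d}) : finType := {j : 'I_d | j \in J}.

Definition Vcol (j : 'I_d) : {set T} := [set M i j | i : 'I_n].

Definition VJ (J : {set 'I_d}) : {set {ffun colsub J -> T}} :=
  [set v : {ffun colsub J -> T} | [forall j : colsub J, v j \in Vcol (val j)]].

Definition pJ (J : {set 'I_d}) (v : {ffun colsub J -> T}) : R :=
  (#|[set i : 'I_n | [forall j : colsub J, M i (val j) == v j]]|%:R) / n%:R.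

Definition QJ (J : {set 'I_d}) (t : R) : R :=
  \sum_(v in VJ J) (pJ v : R) * ((pJ v < t)%R)%:R.

Definition Qj (j : 'I_d) (t : R) : R := QJ [set j] t.

End Exposure.

(* Write [Q_J(s)] as the fraction of rows whose [J]-class is smaller than [s n].
   Adding a column [j] with threshold [t] to a column set [A] refines every
   [A]-class; a row that becomes exposed at [s t] without being exposed at [s]
   lies in an [A]-class [C] whose [(A + j)]-class [C'] satisfies
   [|C'| < t |C|], so it is charged at most [t |C| / |C'|].  Summed over the
   rows of [C] this charge is [t] times the number of values of column [j] on
   [C], hence at most [t |V_j|] per row of the table.  Adding the columns of
   [J] one by one to [{j*}] gives the bound. *)

From Pilot Require Import Defs.
From mathcomp Require Import all_boot all_order all_algebra.
From mathcomp Require Import ring lra.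
Set Implicit Arguments. Unset Strict Implicit. Unset Printing Implicit Defensive.
Import Order.TTheory GRing.Theory Num.Theory.
Local Open Scope ring_scope.

Lemma sum_inv_card_fibres (R : numFieldType) (I U : finType)
    (X : {set I}) (g : I -> U) :
  \sum_(i in X) (#|[set l in X | g l == g i]|%:R)^-1 = #|g @: X|%:R :> R.
Proof.
rewrite (partition_big g (mem (g @: X))) /=; last by move=> i iX; apply: imset_f.
rewrite -[RHS]mulr1n -sumr_const; apply: eq_bigr => _ /imsetP [i0 i0X ->].
rewrite (eq_bigr (fun _ => (#|[set l in X | g l == g i0]|%:R)^-1)); last first.
  by move=> i /andP [_ /eqP ->].
rewrite sumr_const.
have -> : #|[pred i | (i \in X) && (g i == g i0)]| = #|[set l in X | g l == g i0]|.
  by apply: eq_card => k; rewrite !inE.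
have fibre_gt0 : (0 < #|[set l in X | g l == g i0]|)%N.
  by apply/card_gt0P; exists i0; rewrite inE i0X eqxx.
by rewrite -[_ *+ _]mulr_natr mulVf // pnatr_eq0 -lt0n.
Qed.

Lemma lt_indicator_le (R : realFieldType) (a b N s t : R) :
  0 < a -> 0 < b -> 0 <= N -> 0 <= t ->
  ((b / N < s * t)%R)%:R <= ((a / N < s)%R)%:R + t * (a / b) :> R.
Proof.
move=> a_gt0 b_gt0 N_ge0 t_ge0.
have tab_ge0 : 0 <= t * (a / b) by rewrite mulr_ge0 // divr_ge0 // ltW.
have [_|s_le] := ltP (a / N) s.
  by case: (b / N < s * t)%R; rewrite ?mulr1n ?mulr0n; lra.
have [bN_lt|_] := ltP (b / N) (s * t); last by rewrite mulr0n add0r.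
rewrite mulr0n mulr1n add0r mulrA ler_pdivlMr // mul1r.
have bN_lt_taN : b / N < t * a / N.
  by apply: (lt_le_trans bN_lt); rewrite -mulrA mulrC ler_wpM2l.
have N_gt0 : 0 < N.
  by rewrite lt_def N_ge0 andbT; apply: contraTneq bN_lt_taN => ->; rewrite !invr0 !mulr0 ltxx.
by apply/ltW; move: bN_lt_taN; rewrite ltr_pM2r // invr_gt0.
Qed.

Section RowClasses.
Variables (R : realFieldType) (T : finType) (n d : nat) (M : 'M[T]_(n, d)).

Definition agree (A : {set 'I_d}) (i : 'I_n) : {set 'I_n} :=
  [set k | [forall j in A, M k j == M i j]].

Definition row_exposure (A : {set 'I_d}) (s : R) : R :=
  \sum_(i < n) (((#|agree A i|%:R / n%:R < s)%R)%:R / n%:R).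

Definition rowJ (A : {set 'I_d}) (i : 'I_n) : {ffun Defs.colsub A -> T} :=
  [ffun j : Defs.colsub A => M i (val j)].

Lemma pJE A (v : {ffun Defs.colsub A -> T}) :
  pJ R M v = #|[set i | rowJ A i == v]|%:R / n%:R.
Proof.
congr (_%:R / _); apply: eq_card => i; rewrite !inE.
apply/forallP/eqP => [Hi|<- j]; last by rewrite ffunE.
by apply/ffunP => j; rewrite ffunE; apply/eqP.
Qed.

Lemma rowJ_eqE A i k : (rowJ A k == rowJ A i) = (k \in agree A i).
Proof.
rewrite inE; apply/eqP/forallP => [Hk j|Hk].
- apply/implyP => jA; have /ffunP/(_ (exist _ j jA)) := Hk.
  by rewrite !ffunE => ->.
- by apply/ffunP => -[j jA]; rewrite !ffunE; apply/eqP/(implyP (Hk j)).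
Qed.

Lemma pJ_rowJ A i : pJ R M (rowJ A i) = #|agree A i|%:R / n%:R.
Proof. by rewrite pJE; congr (_%:R / _); apply: eq_card => k; rewrite inE rowJ_eqE. Qed.

Lemma QJ_row_exposure A s : QJ (R := R) M A s = row_exposure A s.
Proof.
rewrite /row_exposure (eq_bigr (fun i => ((pJ R M (rowJ A i) < s)%R)%:R / n%:R));
  last by move=> i _; rewrite pJ_rowJ.
rewrite (partition_big (rowJ A) (mem (VJ M A))) /=; last first.
  by move=> i _; rewrite inE; apply/forallP => j; rewrite ffunE; apply: imset_f.
apply: eq_bigr => v _.
rewrite (eq_bigr (fun _ => ((pJ R M v < s)%R)%:R / n%:R)); last by move=> i /eqP ->.
rewrite sumr_const pJE (@eq_card _ _ [set i | rowJ A i == v]);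
  last by move=> i; rewrite inE.
by rewrite -[_ *+ _]mulr_natr; ring.
Qed.

Lemma agree_refl A i : i \in agree A i.
Proof. by rewrite inE; apply/forallP => j; apply/implyP. Qed.

Lemma agree_sym A i k : (k \in agree A i) = (i \in agree A k).
Proof.
by rewrite !inE; apply/forallP/forallP => H j; apply/implyP => jA;
  rewrite eq_sym (implyP (H j) jA).
Qed.

Lemma agree_eq A i k : k \in agree A i -> agree A k = agree A i.
Proof. by rewrite -rowJ_eqE => /eqP ik; apply/setP => l; rewrite -!rowJ_eqE ik. Qed.

Lemma agree_setU1 A j i : agree (A :|: [set j]) i = [set l in agree A i | M l j == M i j].
Proof.
apply/setP => l; rewrite !inE; apply/forallP/andP => [H|[/forallP H1 H2] j'].
- split; last by have := H j; rewrite !inE eqxx orbT.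
  by apply/forallP => j'; apply/implyP => jA; have := H j'; rewrite !inE jA.
- by rewrite !inE; apply/implyP => /orP [jA|/eqP ->] //; exact: (implyP (H1 j')).
Qed.

Lemma card_agree_gt0 A i : (0 < #|agree A i|)%N.
Proof. by apply/card_gt0P; exists i; apply: agree_refl. Qed.

Lemma sum_agree_ratio_le A j :
  \sum_(i < n) (#|agree A i|%:R / #|agree (A :|: [set j]) i|%:R : R)
    <= n%:R * #|Vcol M j|%:R.
Proof.
have -> : \sum_(i < n) (#|agree A i|%:R / #|agree (A :|: [set j]) i|%:R : R)
   = \sum_(k < n) #|(fun l => M l j) @: agree A k|%:R.
  rewrite (eq_bigr (fun i => \sum_(k < n) if k \in agree A i then
      (#|agree (A :|: [set j]) i|%:R)^-1 else 0 : R)); last first.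
    by move=> i _; rewrite -big_mkcond /= sumr_const mulr_natl.
  rewrite exchange_big /=; apply: eq_bigr => k _.
  rewrite -sum_inv_card_fibres [RHS]big_mkcond /=; apply: eq_bigr => i _.
  by rewrite agree_sym; case: ifP => // ik; rewrite agree_setU1 (agree_eq ik).
apply: (@le_trans _ _ (\sum_(k < n) #|Vcol M j|%:R)); last first.
  by rewrite sumr_const card_ord mulr_natl.
apply: ler_sum => k _; rewrite ler_nat; apply: subset_leq_card.
by apply/subsetP => _ /imsetP [i _ ->]; apply: imset_f.
Qed.

Lemma row_exposure_setU1 A j s t : 0 <= t ->
  row_exposure (A :|: [set j]) (s * t) <= row_exposure A s + t * #|Vcol M j|%:R.
Proof.
move=> t_ge0; rewrite /row_exposure.
apply: (@le_trans _ _ (\sum_(i < n) (((#|agree A i|%:R / n%:R < s)%R)%:R / n%:R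
        + t / n%:R * (#|agree A i|%:R / #|agree (A :|: [set j]) i|%:R)))).
  apply: ler_sum => i _; rewrite mulrAC -mulrDl ler_wpM2r ?invr_ge0 //.
  by apply: lt_indicator_le; rewrite ?ltr0n ?card_agree_gt0.
rewrite big_split /= lerD2l -mulr_sumr.
apply: (@le_trans _ _ (t / n%:R * (n%:R * #|Vcol M j|%:R))).
  by rewrite ler_wpM2l ?divr_ge0 ?sum_agree_ratio_le.
have [n0|n_neq0] := eqVneq (n%:R : R) 0; first by rewrite n0 invr0 mulr0 mul0r mulr_ge0.
by rewrite mulrA divfK.
Qed.

Lemma row_exposure_setU_seq (t : 'I_d -> R) j0 (s : seq 'I_d) :
  (forall j, j \in s -> 0 <= t j) ->
  row_exposure (j0 |: [set j in s]) (t j0 * \prod_(j <- s) t j)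
    <= row_exposure [set j0] (t j0) + \sum_(j <- s) t j * #|Vcol M j|%:R.
Proof.
elim: s => [|a s IHs] t_ge0.
  have -> : j0 |: [set j in [::]] = [set j0] by apply/setP => j; rewrite !inE orbF.
  by rewrite !big_nil mulr1 addr0.
have -> : j0 |: [set j in a :: s] = (j0 |: [set j in s]) :|: [set a].
  by apply/setP => j; rewrite !inE orbA orbAC.
rewrite !big_cons mulrCA mulrC.
apply: le_trans (row_exposure_setU1 _ _ _ (t_ge0 a (mem_head _ _))) _.
rewrite addrCA [X in X <= _]addrC lerD2l.
by apply: IHs => j js; apply: t_ge0; rewrite inE js orbT.
Qed.

Lemma row_exposure_ge0 A s : 0 <= row_exposure A s.
Proof. by apply: sumr_ge0 => i _; rewrite divr_ge0. Qed.
End RowClasses.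

Theorem theorem1 (R : realFieldType) (T : finType) (n d : nat)
  (M : 'M[T]_(n, d)) (J : {set 'I_d}) (t : 'I_d -> R) (jstar : 'I_d) :
  J != set0 ->
  (forall j, j \in J -> 0 <= t j <= 1) ->
  jstar \in J ->
  QJ M J (\prod_(j in J) t j)
    <= \sum_(j in J) Qj M j (t j) + \sum_(j in J :\ jstar) t j * #|Vcol M j|%:R.
Proof.
move=> _ t01 jstarJ.
have t_ge0 j : j \in enum (J :\ jstar) -> 0 <= t j.
  by rewrite mem_enum inE => /andP [_ /t01 /andP []].
have J_split : J = jstar |: [set j in enum (J :\ jstar)].
  by apply/setP => j; rewrite !inE mem_enum !inE; case: eqP => // ->.
have := row_exposure_setU_seq M jstar t_ge0.
rewrite -J_split !big_enum /= -(big_setD1 jstar jstarJ) -QJ_row_exposure => /le_trans; apply.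
rewrite lerD2r (big_setD1 _ jstarJ) /= /Qj QJ_row_exposure lerDl.
by apply: sumr_ge0 => j _; rewrite QJ_row_exposure row_exposure_ge0.
Qed.
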